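(* Let $\mathcal{K}=(\mathcal{R},\mathcal{T})$ be an ME-consistent $\mathcal{ALCP}$ knowledge base, $C,D$ concepts, $\kappa\in\mathcal{L}$, and $p_1<p_2$. Suppose $\mathcal{P}_1,\mathcal{P}_2$ are ME-$\mathcal{ALCP}$-models of $\mathcal{K}$ with $\Pr_{\mathcal{P}_1}(C\sqsubseteq D\mid\kappa)=p_1$ and $\Pr_{\mathcal{P}_2}(C\sqsubseteq D\mid\kappa)=p_2$. Then for every $p$ between $p_1$ and $p_2$ there exists an ME-$\mathcal{ALCP}$-model $\mathcal{P}$ of $\mathcal{K}$ with $\Pr_{\mathcal{P}}(C\sqsubseteq D\mid\kappa)=p$.
   Context: $\mathcal{L}$ is a propositional language over a finite set of variables; $\mathrm{Int}(\mathcal{L})$ is the set of truth assignments. A probability distribution over $\mathcal{L}$ is $P:\mathrm{Int}(\mathcal{L})\to[0,1]$ summing to $1$, with $P(\phi)=\sum_{v\models\phi}P(v)$. A probabilistic constraint is $c_0+\sum_{i=1}^k c_i\,\mathsf{p}(\phi_i)\ge 0$ ($c_i\in\mathbb{R}$, $\phi_i\in\mathcal{L}$), satisfied by $P$ iff $c_0+\sum_ic_iP(\phi_i)\ge0$; $\mathrm{Mod}(\mathcal{R})$ is the set of distributions satisfying all constraints in $\mathcal{R}$; for consistent $\mathcal{R}$ (i.e. $\mathrm{Mod}(\mathcal{R})\ne\emptyset$), $P^{ME}_{\mathcal{R}}$ is the unique maximizer in $\mathrm{Mod}(\mathcal{R})$ of $H(P)=-\sum_vP(v)\log P(v)$. Concepts: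 $C::=A\mid\neg C\mid C\sqcap C\mid\exists r.C$ with concept names $A$ and role names $r$. An $\mathcal{L}$-GCI is $\langle C\sqsubseteq D:\kappa\rangle$, $\kappa\in\mathcal{L}$; an $\mathcal{L}$-TBox is a finite set of them; a KB is $\mathcal{K}=(\mathcal{R},\mathcal{T})$ with $\mathcal{R}$ a set of probabilistic constraints and $\mathcal{T}$ an $\mathcal{L}$-TBox. A possible world $\mathcal{I}=(\Delta^{\mathcal{I}},\cdot^{\mathcal{I}},v^{\mathcal{I}})$ consists of a classical $\mathcal{ALC}$ interpretation (nonempty domain, concept names to subsets, role names to binary relations, extended as usual to complex concepts) and $v^{\mathcal{I}}\in\mathrm{Int}(\mathcal{L})$; it models $\langle C\sqsubseteq D:\kappa\rangle$ iff $v^{\mathcal{I}}\not\models\kappa$ or $C^{\mathcal{I}}\subseteq D^{\mathcal{I}}$. We write $\mathcal{I}\models\kappa$ for $v^{\mathcal{I}}\models\kappa$ and $\mathcal{I}\models C\sqsubseteq D$ for $C^{\mathcal{I}}\subseteq D^{\mathcal{I}}$. An $\mathcal{ALCP}$-interpretation $\mathcal{P}=(\mathfrak{I},P_{\mathfrak{I}})$ is a nonempty finite set of possible worlds with a probability distribution on it; $P^{\mathcal{P}}(v)=\sum_{\mathcal{I}\in\mathfrak{I},v^{\mathcal{I}}=v}P_{\mathfrak{I}}(\mathcal{I})$. $\mathcal{P}$ is an ME-$\mathcal{ALCP}$-model of $\mathcal{K}$ iff all worlds in $\mathfrak{I}$ model every GCI of $\mathcal{T}$ and $P^{\mathcal{P}}=P^{ME}_{\mathcal{R}}$;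 $\mathcal{K}$ is ME-consistent iff such a model exists. $\Pr_{\mathcal{P}}(C\sqsubseteq D\mid\kappa)=\big(\sum_{\mathcal{I}\in\mathfrak{I},\mathcal{I}\models\kappa,\mathcal{I}\models C\sqsubseteq D}P_{\mathfrak{I}}(\mathcal{I})\big)/\big(\sum_{\mathcal{I}\in\mathfrak{I},\mathcal{I}\models\kappa}P_{\mathfrak{I}}(\mathcal{I})\big)$, defined when the denominator (which equals $P^{\mathcal{P}}(\kappa)$) is positive. *)

From HB Require Import structures.
From mathcomp Require Import all_boot all_order all_algebra.
From mathcomp Require Import boolp reals exp.
From Stdlib Require List.
Set Implicit Arguments. Unset Strict Implicit. Unset Printing Implicit Defensive.
Import Order.TTheory GRing.Theory Num.Theory.
Local Open Scope ring_scope.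

Inductive formula (V : Type) : Type :=
  | FVar of V
  | FNot of formula V
  | FAnd of formula V & formula V
  | FOr of formula V & formula V.

Definition assignment (V : finType) := {ffun V -> bool}.

Fixpoint holds (V : finType) (v : assignment V) (f : formula V) : bool :=
  match f with
  | FVar x => v x
  | FNot g => ~~ holds v g
  | FAnd g h => holds v g && holds v h
  | FOr g h => holds v g || holds v h
  end.

Definition is_distr (V : finType) (R : realType) (P : assignment V -> R) : Prop :=
  (forall v, 0 <= P v) /\ \sum_(v : assignment V) P v = 1.

Definition prob (V : finType) (R : realType) (P : assignment V -> R) (f : formula V) : R :=
  \sum_(v : assignment V | holds v f) P v.

Record constraint (V : finType) (R : realType) := Constraint {
  c0 : R;
  cterms : seq (R * formula V) }.

Definition sat_constraint (V : finType) (R : realType) (P : assignment V -> R)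
  (c : constraint V R) : Prop :=
  0 <= c0 c + \sum_(t <- cterms c) t.1 * prob P t.2.

Definition Mod (V : finType) (R : realType) (Rc : constraint V R -> Prop)
  (P : assignment V -> R) : Prop :=
  is_distr P /\ forall c, Rc c -> sat_constraint P c.

(* entropy, with the convention 0 log 0 = 0 *)
Definition xlnx (R : realType) (x : R) : R := if x == 0 then 0 else x * ln x.
Definition entropy (V : finType) (R : realType) (P : assignment V -> R) : R :=
  - \sum_(v : assignment V) xlnx (P v).

Definition is_ME_distr (V : finType) (R : realType) (Rc : constraint V R -> Prop)
  (P : assignment V -> R) : Prop :=
  Mod Rc P /\ forall Q, Mod Rc Q -> entropy Q <= entropy P.

Inductive concept (CN RN : Type) : Type :=
  | CAtom of CN
  | CNeg of concept CN RN
  | CAnd of concept CN RN & concept CN RN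
  | CEx of RN & concept CN RN.

Record world (V : finType) (CN RN : Type) := World {
  dom : Type;
  dom_inh : dom;
  cint : CN -> dom -> Prop;
  rint : RN -> dom -> dom -> Prop;
  wval : assignment V }.

Fixpoint cext (V : finType) (CN RN : Type) (I : world V CN RN)
  (C : concept CN RN) : dom I -> Prop :=
  match C with
  | CAtom a => @cint V CN RN I a
  | CNeg C' => fun x => ~ @cext V CN RN I C' x
  | CAnd C1 C2 => fun x => @cext V CN RN I C1 x /\ @cext V CN RN I C2 x
  | CEx r C' => fun x => exists y, @rint V CN RN I r x y /\ @cext V CN RN I C' y
  end.
Arguments cext {V CN RN} I C _.

Definition w_subsumes (V : finType) (CN RN : Type) (I : world V CN RN)
  (C D : concept CN RN) : Prop :=
  forall x, cext I C x -> cext I D x.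

Record gci (V : finType) (CN RN : Type) := GCI {
  glhs : concept CN RN;
  grhs : concept CN RN;
  gctx : formula V }.

Definition models_gci (V : finType) (CN RN : Type) (I : world V CN RN)
  (g : gci V CN RN) : Prop :=
  ~~ holds (wval I) (gctx g) \/ w_subsumes I (glhs g) (grhs g).

Record kb (V : finType) (CN RN : Type) (R : realType) := KB {
  kbR : constraint V R -> Prop;
  kbT : seq (gci V CN RN) }.

Record alcp_interp (V : finType) (CN RN : Type) (R : realType) := ALCPInterp {
  widx : finType;
  wrld : widx -> world V CN RN;
  wpr : widx -> R;
  wpr_ge0 : forall i, 0 <= wpr i;
  wpr_sum1 : \sum_(i : widx) wpr i = 1 }.
Arguments wrld {V CN RN R} a _.
Arguments wpr {V CN RN R} a _.

Definition induced_distr (V : finType) (CN RN : Type) (R : realType)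
  (P : alcp_interp V CN RN R) : assignment V -> R :=
  fun v => \sum_(i : widx P | wval (wrld P i) == v) wpr P i.

Definition ME_model (V : finType) (CN RN : Type) (R : realType)
  (K : kb V CN RN R) (P : alcp_interp V CN RN R) : Prop :=
  (forall i g, Stdlib.Lists.List.In g (kbT K) -> models_gci (wrld P i) g) /\
  is_ME_distr (kbR K) (induced_distr P).

Definition ME_consistent (V : finType) (CN RN : Type) (R : realType)
  (K : kb V CN RN R) : Prop :=
  exists P : alcp_interp V CN RN R, ME_model K P.

(* Pr_P(C ⊑ D | kappa) = p  (including that it is defined) *)
Definition cond_num (V : finType) (CN RN : Type) (R : realType)
  (P : alcp_interp V CN RN R) (C D : concept CN RN) (kappa : formula V) : R :=
  \sum_(i : widx P | holds (wval (wrld P i)) kappa && `[< w_subsumes (wrld P i) C D >])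
    wpr P i.

Definition cond_den (V : finType) (CN RN : Type) (R : realType)
  (P : alcp_interp V CN RN R) (kappa : formula V) : R :=
  \sum_(i : widx P | holds (wval (wrld P i)) kappa) wpr P i.

Definition cond_pr_is (V : finType) (CN RN : Type) (R : realType)
  (P : alcp_interp V CN RN R) (C D : concept CN RN) (kappa : formula V) (p : R) : Prop :=
  0 < cond_den P kappa /\ cond_num P C D kappa / cond_den P kappa = p.

(** A convex combination of two ME-models is again an ME-model: the worlds
    of both are kept and their weights scaled by [l] and [1 - l].  Its induced
    distribution is the same combination of two ME-distributions, and such a
    combination is again an ME-distribution because [Mod] is convex and the
    entropy concave.  The conditional probability of the mixture is
    [(l n1 + (1 - l) n2) / (l d1 + (1 - l) d2)], which sweeps continuously
    from [n2 / d2] to [n1 / d1] as [l] goes from [0] to [1]; the weight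
    giving the value [p] is found by solving a linear equation. *)

From HB Require Import structures.
From mathcomp Require Import all_boot all_order all_algebra.
From mathcomp Require Import boolp reals exp.
From mathcomp Require Import ring lra.
Import Order.TTheory GRing.Theory Num.Theory.
Set Implicit Arguments. Unset Strict Implicit.
Local Open Scope ring_scope.

Lemma convex_comb_gt0 (R : realDomainType) (l x y : R) :
  0 <= l <= 1 -> 0 < x -> 0 < y -> 0 < l * x + (1 - l) * y.
Proof.
move=> /andP[l0 l1] x0 y0; have [->|lneq0] := eqVneq l 0.
  by rewrite mul0r add0r subr0 mul1r.
have lgt0 : 0 < l by rewrite lt_neqAle eq_sym lneq0.
by rewrite ltr_pwDl ?mulr_gt0 // mulr_ge0 ?subr_ge0 // ltW.
Qed.

Lemma mix_ratio_between (R : realFieldType) (n1 d1 n2 d2 p : R) :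
  0 < d1 -> 0 < d2 -> n1 / d1 <= p <= n2 / d2 ->
  exists2 l, 0 <= l <= 1 & (l * n1 + (1 - l) * n2) / (l * d1 + (1 - l) * d2) = p.
Proof.
move=> d1gt0 d2gt0; have [d1neq0 d2neq0] := (lt0r_neq0 d1gt0, lt0r_neq0 d2gt0).
have [q1 ->] : exists q1, n1 = q1 * d1 by exists (n1 / d1); rewrite divfK.
have [q2 ->] : exists q2, n2 = q2 * d2 by exists (n2 / d2); rewrite divfK.
rewrite !mulfK // => /andP[le1 le2].
have [->|pneq] := eqVneq p q2.
  exists 0; first by rewrite lexx ler01.
  by rewrite !mul0r !add0r subr0 !mul1r mulfK.
have lt2 : p < q2 by rewrite lt_neqAle pneq.
set a := d2 * (q2 - p); set b := d1 * (p - q1).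
have agt0 : 0 < a by rewrite mulr_gt0 // subr_gt0.
have bge0 : 0 <= b by rewrite mulr_ge0 ?subr_ge0 // ltW.
have abgt0 : 0 < a + b by rewrite ltr_pwDl.
(* [l] solves [l d1 (q1 - p) + (1 - l) d2 (q2 - p) = 0]. *)
have hl : 0 <= a / (a + b) <= 1.
  by rewrite ler_pdivrMr // mul1r lerDl bge0 andbT divr_ge0 ?ltW.
exists (a / (a + b)) => //.
have dgt0 := convex_comb_gt0 hl d1gt0 d2gt0.
rewrite -[RHS](mulfK (lt0r_neq0 dgt0)); congr (_ / _).
by move: (lt0r_neq0 abgt0); rewrite /a /b => ?; field.
Qed.

Lemma ln_le_subr1 (R : realType) (y : R) : 0 < y -> ln y <= y - 1.
Proof.
move=> ygt0; have := @le_ln1Dx R (y - 1).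
by rewrite addrCA subrr addr0; apply; lra.
Qed.

(* The tangent line of [x ln x] at [c] is [a |-> a ln c + a - c]. *)
Lemma xlnx_ge_tangent (R : realType) (a c : R) : 0 <= a -> 0 < c ->
  a * ln c + a - c <= xlnx a.
Proof.
move=> a0 cgt0; rewrite /xlnx; have [->|aneq0] := eqVneq a 0.
  by rewrite mul0r add0r sub0r oppr_le0 ltW.
have agt0 : 0 < a by rewrite lt_neqAle eq_sym aneq0.
have := ln_le_subr1 (divr_gt0 cgt0 agt0); rewrite ln_div ?posrE // => hln.
have : a * (ln c - ln a) <= a * (c / a - 1) by rewrite ler_pM2l.
rewrite mulrBr mulrBr mulrCA divff ?mulr1 //; lra.
Qed.

Lemma xlnx_convex (R : realType) (l a b : R) : 0 <= l <= 1 -> 0 <= a -> 0 <= b ->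
  xlnx (l * a + (1 - l) * b) <= l * xlnx a + (1 - l) * xlnx b.
Proof.
move=> /andP[l0 l1] a0 b0.
have l'0 : 0 <= 1 - l by rewrite subr_ge0.
set c := l * a + (1 - l) * b.
have [c0|cneq0] := eqVneq c 0.
  have weight_xlnx0 m x : m * x = 0 -> m * xlnx x = 0.
    move=> /eqP; rewrite mulf_eq0 => /orP[/eqP->|/eqP->].
      by rewrite mul0r.
    by rewrite /xlnx eqxx mulr0.
  have la0 : l * a = 0 by move: c0; rewrite /c; nra.
  have lb0 : (1 - l) * b = 0 by move: c0; rewrite /c; nra.
  by rewrite c0 {1}/xlnx eqxx !weight_xlnx0 ?addr0.
have cgt0 : 0 < c by rewrite lt_neqAle eq_sym cneq0 addr_ge0 ?mulr_ge0.
(* Average the two tangent-line bounds at [c]. *)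
have ha := ler_wpM2l l0 (xlnx_ge_tangent a0 cgt0).
have hb := ler_wpM2l l'0 (xlnx_ge_tangent b0 cgt0).
have <- : l * (a * ln c + a - c) + (1 - l) * (b * ln c + b - c) = xlnx c.
  by rewrite /xlnx (negbTE cneq0) /c; ring.
exact: lerD.
Qed.

Section MixDistr.
Variables (V : finType) (R : realType) (l : R).
Hypothesis hl : 0 <= l <= 1.
Variables (Q1 Q2 : assignment V -> R).

Definition mix_distr : assignment V -> R := fun v => l * Q1 v + (1 - l) * Q2 v.

Lemma prob_mix f : prob mix_distr f = l * prob Q1 f + (1 - l) * prob Q2 f.
Proof. by rewrite /prob /mix_distr big_split /= -!mulr_sumr. Qed.

Lemma is_distr_mix : is_distr Q1 -> is_distr Q2 -> is_distr mix_distr.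
Proof.
case/andP: hl => l0 l1 [Q1ge0 Q1sum] [Q2ge0 Q2sum]; split.
  by move=> v; rewrite addr_ge0 ?mulr_ge0 ?subr_ge0.
by rewrite /mix_distr big_split /= -!mulr_sumr Q1sum Q2sum; ring.
Qed.

Lemma sat_constraint_mix c :
  sat_constraint Q1 c -> sat_constraint Q2 c -> sat_constraint mix_distr c.
Proof.
case/andP: hl => l0 l1; rewrite /sat_constraint => sat1 sat2.
have -> : c0 c + \sum_(t <- cterms c) t.1 * prob mix_distr t.2 =
    l * (c0 c + \sum_(t <- cterms c) t.1 * prob Q1 t.2) +
    (1 - l) * (c0 c + \sum_(t <- cterms c) t.1 * prob Q2 t.2).
  rewrite !mulrDr !mulr_sumr addrACA -big_split /=.
  congr (_ + _); first ring.
  by apply: eq_bigr => t _; rewrite prob_mix; ring.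
by rewrite addr_ge0 ?mulr_ge0 ?subr_ge0.
Qed.

Lemma Mod_mix (Rc : constraint V R -> Prop) :
  Mod Rc Q1 -> Mod Rc Q2 -> Mod Rc mix_distr.
Proof.
move=> [dQ1 satQ1] [dQ2 satQ2]; split; first exact: is_distr_mix.
by move=> c Rcc; apply: sat_constraint_mix; [apply: satQ1 | apply: satQ2].
Qed.

Lemma entropy_mix : is_distr Q1 -> is_distr Q2 ->
  l * entropy Q1 + (1 - l) * entropy Q2 <= entropy mix_distr.
Proof.
move=> [Q1ge0 _] [Q2ge0 _].
rewrite /entropy !mulrN -opprD lerN2 !mulr_sumr -big_split /=.
by apply: ler_sum => v _; apply: xlnx_convex.
Qed.

Lemma is_ME_distr_mix (Rc : constraint V R -> Prop) :
  is_ME_distr Rc Q1 -> is_ME_distr Rc Q2 -> is_ME_distr Rc mix_distr.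
Proof.
case/andP: hl => l0 l1 [ModQ1 maxQ1] [ModQ2 maxQ2].
split=> [|Q ModQ]; first exact: Mod_mix.
apply: le_trans (entropy_mix ModQ1.1 ModQ2.1).
rewrite -[entropy Q]mul1r -{1}(subrK l 1) mulrDl addrC.
by rewrite lerD // ler_wpM2l ?subr_ge0 ?maxQ1 ?maxQ2.
Qed.

End MixDistr.

Section MixInterp.
Variables (V : finType) (CN RN : Type) (R : realType).
Variables (P1 P2 : alcp_interp V CN RN R) (l : R).
Hypothesis hl : 0 <= l <= 1.

Definition mix_world (s : widx P1 + widx P2) : world V CN RN :=
  match s with inl i => wrld P1 i | inr j => wrld P2 j end.

Definition mix_weight (s : widx P1 + widx P2) : R :=
  match s with inl i => l * wpr P1 i | inr j => (1 - l) * wpr P2 j end.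

Lemma mix_weight_ge0 s : 0 <= mix_weight s.
Proof. by case/andP: hl => l0 l1; case: s => i; rewrite mulr_ge0 ?wpr_ge0 ?subr_ge0. Qed.

Lemma mix_weight_sum1 : \sum_s mix_weight s = 1.
Proof. by rewrite big_sumType /= -!mulr_sumr !wpr_sum1 !mulr1 subrKC. Qed.

Definition alcp_mix : alcp_interp V CN RN R :=
  ALCPInterp mix_world mix_weight_ge0 mix_weight_sum1.

Lemma induced_distr_mix :
  induced_distr alcp_mix = mix_distr l (induced_distr P1) (induced_distr P2).
Proof. by apply: funext => v; rewrite /induced_distr /= big_sumType /= -!mulr_sumr. Qed.

Lemma cond_num_mix C D kappa :
  cond_num alcp_mix C D kappa = l * cond_num P1 C D kappa + (1 - l) * cond_num P2 C D kappa.
Proof. by rewrite /cond_num /= big_sumType /= -!mulr_sumr. Qed.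

Lemma cond_den_mix kappa :
  cond_den alcp_mix kappa = l * cond_den P1 kappa + (1 - l) * cond_den P2 kappa.
Proof. by rewrite /cond_den /= big_sumType /= -!mulr_sumr. Qed.

Lemma ME_model_mix (K : kb V CN RN R) :
  ME_model K P1 -> ME_model K P2 -> ME_model K alcp_mix.
Proof.
move=> [T1 ME1] [T2 ME2]; split; first by case=> [i|j] g /=; [exact: T1 | exact: T2].
by rewrite induced_distr_mix; apply: is_ME_distr_mix.
Qed.

End MixInterp.

Theorem theorem2 (V : finType) (CN RN : Type) (R : realType)
  (K : kb V CN RN R) (C D : concept CN RN) (kappa : formula V) (p1 p2 : R)
  (P1 P2 : alcp_interp V CN RN R) :
  ME_consistent K -> p1 < p2 ->
  ME_model K P1 -> ME_model K P2 ->
  cond_pr_is P1 C D kappa p1 -> cond_pr_is P2 C D kappa p2 ->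
  forall p : R, p1 <= p <= p2 ->
  exists P : alcp_interp V CN RN R, ME_model K P /\ cond_pr_is P C D kappa p.
Proof.
move=> _ _ ME1 ME2 [den1gt0 pr1] [den2gt0 pr2] p.
rewrite -pr1 -pr2 => /(mix_ratio_between den1gt0 den2gt0)[l hl prE].
exists (alcp_mix P1 P2 hl); split; first exact: ME_model_mix.
rewrite /cond_pr_is cond_num_mix cond_den_mix.
by split; first exact: convex_comb_gt0.
Qed.
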